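(* Let $U$ be as in the context with $n\ge1$. Then the Sato group element of $\mathcal W_U$ is $$\mathtt G_{\mathcal W_U}=\sum_{m\ge0}\frac{1}{m!}\,\langle\varphi^m\rangle_U\,\partial_z^m ,$$ equivalently $\mathtt G_{\mathcal W_U}\cdot z^{k-1}=\Phi^U_k$ for all $k\ge1$ (so $\{\Phi^U_k\}$ is the distinguished basis $\{\mathtt G_{\mathcal W_U}\cdot z^{k-1}\}$).
   Context: $H_+=\mathbb C[z]$, $H_-=z^{-1}\mathbb C[[z^{-1}]]$, $H=H_+\oplus H_-$; ${\rm Gr}^{(0)}_+$ is the set of closed subspaces $\mathcal W\subset H$ with $\pi_+:\mathcal W\to H_+$ an isomorphism; $\mathcal D=\mathbb C((z^{-1}))[[\partial_z]]$, $\mathcal D_\pm=H_\pm[[\partial_z]]$; $\mathtt G_{\mathcal W}$ is the unique operator with $\mathtt G_{\mathcal W}-1\in\mathcal D_-$ and $\mathcal W=\mathtt G_{\mathcal W}\cdot H_+$. Let $\hbar$ be a parameter and $U(z)=\hbar^{-1}\sum_{k\le n}b_kz^k\in\mathbb C((z^{-1}))$ with $b_n\neq0$. For a formal power series $F(\varphi)$ with coefficients in $H$ define the formal Gaussian average $$\langle F(\varphi)\rangle_U:=\frac{1}{\sqrt{2\pi}}\int_{\mathbb R}d\tilde\varphi\;F\!\Big(\tfrac{\tilde\varphi}{\sqrt{U(z)}}\Big)\exp\Big(-\tfrac{\tilde\varphi^2}{2}-\sum_{j\ge3}\frac{U^{(j-2)}(z)}{j!\,U(z)^{j/2}}\tilde\varphi^j\Big),$$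 computed by expanding the non-Gaussian part of the exponential as a power series in $\tilde\varphi$ and integrating termwise against $e^{-\tilde\varphi^2/2}$ (moments $(2j-1)!!$ for $\tilde\varphi^{2j}$, $0$ for odd powers); here $U^{(m)}=\partial_z^mU$. Set $\Phi^U_k(z):=\langle(z+\varphi)^{k-1}\rangle_U$, $k\ge1$; then $\Phi^U_k=z^{k-1}(1+O(z^{-1}))$ and $\mathcal W_U:={\rm span}\{\Phi^U_1,\Phi^U_2,\dots\}$ (closure) is a point of ${\rm Gr}^{(0)}_+$. *)

From HB Require Import structures.
From mathcomp Require Import all_boot all_order all_algebra.
From mathcomp Require Import boolp classical_sets fsbigop reals.
From mathcomp Require Export complex.
From Stdlib Require Import ClassicalEpsilon.
Set Implicit Arguments. Unset Strict Implicit. Unset Printing Implicit Defensive.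
Import Order.TTheory GRing.Theory Num.Theory.
Local Open Scope ring_scope.
Local Open Scope classical_set_scope.

Section Laurent.
Variable C : numClosedFieldType.

(* An element of H = C((z^-1)) is given by its coefficient function:
   f k = coefficient of z^k.  Elements of H have only finitely many
   nonzero coefficients of positive degree. *)
Definition Lser := int -> C.

Definition isH (f : Lser) : Prop := exists N : int, forall k, N < k -> f k = 0.
Definition Hplus : set Lser := [set f | isH f /\ forall k, k < 0 -> f k = 0].
Definition Hminus : set Lser := [set f | forall k, 0 <= k -> f k = 0].

Definition lone : Lser := fun k => if k == 0 then 1 else 0.
Definition zpow (m : int) : Lser := fun k => if k == m then 1 else 0.
Definition ladd (f g : Lser) : Lser := fun k => f k + g k.
Definition lscale (c : C) (f : Lser) : Lser := fun k => c * f k.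
(* Cauchy product (a finite sum for f, g in H) *)
Definition lmul (f g : Lser) : Lser :=
  fun k => \sum_(i \in [set: int]) f i * g (k - i).
Definition lexp (f : Lser) (p : nat) : Lser := iter p (lmul f) lone.
Definition linv (f : Lser) : Lser :=
  epsilon (inhabits (fun _ => 0)) (fun g => isH g /\ lmul f g = lone).
Definition lder (f : Lser) : Lser := fun k => (k + 1)%:~R * f (k + 1).
Definition lderiv_n (m : nat) (f : Lser) : Lser := iter m lder f.

(* Gaussian moments: (1/sqrt(2 pi)) int x^m e^{-x^2/2} dx = (m-1)!! for m even, 0 for m odd *)
Definition gauss_moment (m : nat) : C :=
  if odd m then 0 else \prod_(i < m./2) (2 * i + 1)%:R.

(* The term of the formal expansion of < phi^a >_U indexed by the ordered
   tuple js = (j_1,...,j_r) (encoded as x_i = j_i - 3 >= 0) coming from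
   (1/r!) (- sum_{j>=3} U^{(j-2)}/(j! U^{j/2}) phi~^j)^r, integrated against
   the Gaussian with F(phi~/sqrt U) = phi~^a U^{-a/2}:
   (1/r!) (-1)^r prod_i (U^{(j_i-2)}/j_i!) * U^{-(a+sum j)/2} * (a+sum j - 1)!!. *)
Definition avg_term (U : Lser) (a : nat) (xs : seq nat) : Lser :=
  let js := [seq x + 3 | x <- xs] in
  let r := size xs in
  let tot := (a + sumn js)%N in
  lscale (gauss_moment tot * (-1) ^+ r / (r`!)%:R)
    (lmul (foldr (fun j acc => lmul (lscale ((j`!)%:R^-1) (lderiv_n (j - 2) U)) acc) lone js)
          (lexp (linv U) tot./2)).

(* < phi^a >_U : the (z^-1-adically locally finite) sum of all terms *)
Definition gavg (U : Lser) (a : nat) : Lser :=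
  fun k => \sum_(xs \in [set: seq nat]) avg_term U a xs k.

(* Phi^U_k = < (z + phi)^(k-1) >_U, expanded binomially (linearity of < . >) *)
Definition PhiU (U : Lser) (k : nat) : Lser :=
  fun i => \sum_(a < k) ('C(k.-1, a))%:R * lmul (zpow (k.-1 - a)%:Z) (gavg U a) i.

Definition spanPhi (U : Lser) : set Lser :=
  [set f | exists (N : nat) (c : nat -> C),
      f = fun i => \sum_(k < N) c k * PhiU U k.+1 i].

(* closure in H for the z^-1-adic topology (neighbourhoods of 0: z^N C[[z^-1]]) *)
Definition lclosure (V : set Lser) : set Lser :=
  [set f | isH f /\ forall N : int, exists v, V v /\ forall k, N <= k -> f k = v k].

Definition WU (U : Lser) : set Lser := lclosure (spanPhi U).

(* Operators in D = C((z^-1))[[d_z]]: A = sum_m A m * d_z^m *)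
Definition Dop := nat -> Lser.
Definition Dminus (A : Dop) : Prop := forall m, isH (A m) /\ Hminus (A m).
Definition Gminus1_in_Dminus (G : Dop) : Prop :=
  Dminus (fun m => if m == 0%N then ladd (G m) (lscale (-1) lone) else G m).
(* action of an operator on H_+ (finite sum for polynomials) *)
Definition Dact (G : Dop) (p : Lser) : Lser :=
  fun k => \sum_(m \in [set: nat]) lmul (G m) (lderiv_n m p) k.

Definition is_Sato_element (W : set Lser) (G : Dop) : Prop :=
  Gminus1_in_Dminus G /\ W = lclosure (Dact G @` Hplus).

Definition gaussG (U : Lser) : Dop := fun m => lscale ((m`!)%:R^-1) (gavg U m).

End Laurent.

(* Two facts are needed.
   (1) G - 1 lies in D_-, i.e. <phi^0>_U = 1 + O(z^-1) and <phi^a>_U = O(z^-1)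
       for a >= 1.  This is a degree count: U has degree n >= 1, so 1/U has
       degree -n; the term of <phi^a>_U indexed by (j_1, ..., j_r) multiplies
       r derivatives U^(j_i - 2), of degree <= n + 2 - j_i, by U^(-(a + sum j)/2),
       and a short computation bounds its degree by 0, strictly unless a = r = 0.
   (2) d_z^m z^j = j^_m z^(j-m), so G z^j = sum_m binom(j,m) <phi^m>_U z^(j-m),
       which is the binomial expansion Phi^U_(j+1) of <(z + phi)^j>_U.  As G acts
       linearly on polynomials, G . H_+ is exactly the span of the Phi^U_k, hence
       W_U, the closure of that span, is the closure of G . H_+. *)
From HB Require Import structures.
From mathcomp Require Import all_boot all_order all_algebra.
From mathcomp Require Import boolp classical_sets fsbigop reals complex.
From mathcomp Require Import zify.
From Stdlib Require Import ClassicalEpsilon.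
Import Order.TTheory GRing.Theory Num.Theory.
Local Open Scope ring_scope.
Set Implicit Arguments. Unset Strict Implicit. Unset Printing Implicit Defensive.

Section LaurentSeries.
Variable C : numClosedFieldType.
Implicit Types f g h : Lser C.

Lemma fsbig_setT_seq (T : choiceType) (r : seq T) (F : T -> C) :
  uniq r -> (forall i, i \notin r -> F i = 0) ->
  \sum_(i \in [set: T]) F i = \sum_(i <- r) F i.
Proof.
move=> ur hF; rewrite (fsbigE r) //; last by move=> i _; apply: hF.
by apply: eq_bigl => i; rewrite in_setT.
Qed.

Definition deg_le (N : int) f := forall k, N < k -> f k = 0.

Lemma deg_le_ge N M f : N <= M -> deg_le N f -> deg_le M f.
Proof. by move=> hNM hf k hk; apply: hf; apply: le_lt_trans hk. Qed.

Lemma deg_le_one : deg_le 0 (lone C).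
Proof. by move=> k hk; rewrite /lone; case: eqP => // kE; rewrite kE ltxx in hk. Qed.

Lemma deg_le_mul N M f g : deg_le N f -> deg_le M g -> deg_le (N + M) (lmul f g).
Proof.
move=> hf hg k hk; apply: fsbig1 => i _.
case: (ltrP N i) => hi; first by rewrite hf // mul0r.
by rewrite hg ?mulr0 //; lia.
Qed.

Lemma deg_le_scale N c f : deg_le N f -> deg_le N (lscale c f).
Proof. by move=> hf k hk; rewrite /lscale hf ?mulr0. Qed.

Lemma deg_le_deriv N m f : deg_le N f -> deg_le (N - m%:Z) (lderiv_n m f).
Proof.
move=> hf; elim: m => [|m IH]; first by rewrite subr0.
move=> k hk; rewrite /lderiv_n iterS -/(lderiv_n m f) /lder IH ?mulr0 //; lia.
Qed.

Lemma deg_le_exp N f p : deg_le N f -> deg_le (N * p%:Z) (lexp f p).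
Proof.
move=> hf; elim: p => [|p IH]; first by rewrite mulr0; exact: deg_le_one.
rewrite /lexp iterS -/(lexp f p).
by rewrite intS mulrDr mulr1; exact: deg_le_mul hf IH.
Qed.

Lemma lmul_coef_below d e f g (J : nat) : deg_le d f -> deg_le e g ->
  lmul f g (d + e - J%:Z) = \sum_(t < J.+1) f (d - t%:Z) * g (e - J%:Z + t%:Z).
Proof.
move=> hf hg; rewrite /lmul (fsbig_setT_seq (r := [seq d - t%:Z | t <- iota 0 J.+1])).
- rewrite big_map -(subn0 J.+1) -/(index_iota 0 J.+1) big_mkord.
  by apply: eq_bigr => t _; congr (_ * g _); move: (val t) => {}t; lia.
- by rewrite map_inj_uniq ?iota_uniq // => x y; lia.
move=> i hi; case: (ltrP d i) => hdi; first by rewrite hf ?mul0r.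
case: (ltrP i (d - J%:Z)) => hi2; first by rewrite hg ?mulr0 //; lia.
move/negP: hi; case; apply/mapP; exists (absz (d - i)); last by lia.
by rewrite mem_iota; lia.
Qed.

Lemma lmul_zpow_l q g k : lmul (zpow C q) g k = g (k - q).
Proof.
rewrite /lmul (fsbig_setT_seq (r := [:: q])) //.
  by rewrite big_seq1 /zpow eqxx mul1r.
by move=> i; rewrite inE /zpow => /negbTE ->; rewrite mul0r.
Qed.

Lemma lmul_zpow_r f c q k : lmul f (fun i => c * zpow C q i) k = c * f (k - q).
Proof.
rewrite /lmul (fsbig_setT_seq (r := [:: k - q])) //.
  by rewrite big_seq1 /zpow subKr eqxx mulr1 mulrC.
move=> i; rewrite inE /zpow => hi; rewrite ifF ?mulr0 ?mul0r //.
by apply/negbTE; apply: contra hi => /eqP <-; rewrite subKr.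
Qed.

Section Inverse.
Variables (f : Lser C) (d : int).
Hypotheses (hf : deg_le d f) (hd : f d != 0).

Let u (t : nat) := f (d - t%:Z).
Let c0 := (u 0)^-1.

(* The coefficients c_0, ..., c_j of z^(-d), ..., z^(-d-j) in 1/f, given by
   c_0 = 1/u_0 and c_(j+1) = -(1/u_0) sum_(t <= j) u_(t+1) c_(j-t). *)
Fixpoint inv_coefs (j : nat) : seq C :=
  if j is j'.+1 then
    rcons (inv_coefs j')
      (- c0 * \sum_(t < j'.+1) u t.+1 * nth 0 (inv_coefs j') (j' - t))
  else [:: c0].
Let inv_coef j := nth 0 (inv_coefs j) j.

(* Each list extends the previous one, so its j-th entry is c_j. *)
Lemma size_inv_coefs j : size (inv_coefs j) = j.+1.
Proof. by elim: j => //= j IH; rewrite size_rcons IH. Qed.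

Lemma nth_inv_coefs i j : (i <= j)%N -> nth 0 (inv_coefs j) i = inv_coef i.
Proof.
elim: j => [|j IH] hij; first by move: hij; rewrite leqn0 => /eqP ->.
rewrite /= nth_rcons size_inv_coefs; case: ltnP => hi; first by rewrite IH.
have -> : i = j.+1 by apply/eqP; rewrite eqn_leq hij.
by rewrite /inv_coef /= nth_rcons size_inv_coefs ltnn eqxx.
Qed.

Lemma inv_coefS j : inv_coef j.+1 = - c0 * \sum_(t < j.+1) u t.+1 * inv_coef (j - t).
Proof.
rewrite {1}/inv_coef /= nth_rcons size_inv_coefs ltnn eqxx; congr (_ * _).
by apply: eq_bigr => t _; rewrite nth_inv_coefs // leq_subr.
Qed.

Definition inv_series : Lser C :=
  fun k => if k <= - d then inv_coef (absz (- d - k)) else 0.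

Lemma inv_series_deg : deg_le (- d) inv_series.
Proof. by move=> k hk; rewrite /inv_series leNgt hk. Qed.

Lemma u0c0 : u 0 * c0 = 1.
Proof. by rewrite /c0 mulfV // /u subr0. Qed.

(* The recursion for the c_j says exactly that f * inv_series = 1. *)
Lemma lmul_inv_series : lmul f inv_series = lone C.
Proof.
apply/funext => k; case: (ltrP 0 k) => hk.
  have := deg_le_mul hf inv_series_deg; rewrite subrr => h.
  by rewrite h // deg_le_one.
have [J hJ] : exists J : nat, k = d + - d - J%:Z by exists (absz (- k)); lia.
have conv : \sum_(t < J.+1) f (d - t%:Z) * inv_series (- d - J%:Z + t%:Z) =
            \sum_(t < J.+1) u t * inv_coef (J - t).
  apply: eq_bigr => t _; have := ltn_ord t => ht.
  by rewrite /inv_series ifT; [congr (_ * inv_coef _)|]; lia.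
rewrite hJ (lmul_coef_below _ hf inv_series_deg) conv /lone; case: J {hJ conv} => [|j].
  by rewrite addrN subr0 eqxx big_ord1 subnn u0c0.
rewrite ifF; last by apply/negbTE/eqP; lia.
rewrite big_ord_recl subn0 inv_coefS.
under eq_bigr => i _ do rewrite /bump /=.
by rewrite mulrA mulrN u0c0 mulN1r addNr.
Qed.

Lemma rinv_deg_le g : isH g -> lmul f g = lone C -> deg_le (- d) g.
Proof.
move=> [N hN] hfg.
have vanish (t : nat) k : - d < k -> N - t%:Z < k -> g k = 0.
  elim: t k => [|t IH] k hk1 hk2; first by apply: hN; lia.
  case: (ltrP (N - t%:Z) k) => hk3; first exact: IH.
  have := congr1 (fun F => F (d + k)) hfg.
  rewrite /lmul (fsbig_setT_seq (r := [:: d])) //; last first.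
    move=> i; rewrite inE => /eqP hi.
    case: (ltrP d i) => hdi; first by rewrite hf ?mul0r.
    by rewrite IH ?mulr0 //; lia.
  rewrite big_seq1 (addrC d k) addrK deg_le_one; last by lia.
  by move/eqP; rewrite mulf_eq0 (negbTE hd) /= => /eqP.
by move=> k hk; apply: (vanish (absz (N - k)).+1) => //; lia.
Qed.

End Inverse.

Lemma linv_deg_le f d : deg_le d f -> f d != 0 -> deg_le (- d) (linv f).
Proof.
move=> hf hd; rewrite /linv; set P := fun g => _.
have : P (epsilon (inhabits (fun=> 0)) P).
  apply: epsilon_spec; exists (inv_series f d); split; last exact: lmul_inv_series.
  by exists (- d); apply: inv_series_deg.
by case=> hH hinv; apply: rinv_deg_le hinv.
Qed.

Lemma sumn_shift3 (xs : seq nat) :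
  sumn [seq x + 3 | x <- xs] = (sumn xs + 3 * size xs)%N.
Proof. by elim: xs => //= x xs ->; lia. Qed.

Lemma deriv_product_deg (N : int) (U : Lser C) (xs : seq nat) : deg_le N U ->
  deg_le ((size xs)%:Z * (N - 1) - (sumn xs)%:Z)
    (foldr (fun j acc => lmul (lscale ((j`!)%:R^-1) (lderiv_n (j - 2) U)) acc)
       (lone C) [seq x + 3 | x <- xs]).
Proof.
move=> hU; elim: xs => [|x xs IH] /=; first by apply: deg_le_ge deg_le_one; lia.
have hder := deg_le_scale ((x + 3)`!%:R^-1) (deg_le_deriv (m := (x + 3 - 2)%N) hU).
apply: deg_le_ge (deg_le_mul hder IH).
have -> : (x + 3 - 2 = x.+1)%N by lia.
lia.
Qed.

Lemma avg_degree_bound (n r S a h : nat) :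
  (1 <= n)%N -> (h + h = a + S + 3 * r)%N ->
  (r%:Z * (n%:Z - 1) - S%:Z) + (- n%:Z) * h%:Z <=
  (if (a == 0%N) && (r == 0%N) then 0 else -1).
Proof.
move=> hn hh; case: ifP => [/andP[/eqP ha /eqP hr]|/andP hnot]; first by subst; nia.
have : (0 < a + r)%N by lia.
nia.
Qed.

Lemma avg_term_deg (U : Lser C) (n : nat) a xs : (1 <= n)%N -> deg_le n%:Z U ->
  deg_le (- n%:Z) (linv U) ->
  deg_le (if (a == 0%N) && (xs == [::]) then 0 else -1) (avg_term U a xs).
Proof.
move=> hn hU hV; rewrite /avg_term; set tot := (a + _)%N.
case: (boolP (odd tot)) => hodd.
  by move=> k _; rewrite /lscale /gauss_moment hodd !mul0r.
have hprod := deg_le_mul (deriv_product_deg (xs := xs) hU) (deg_le_exp (p := tot./2) hV).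
apply/deg_le_scale/(deg_le_ge _ hprod).
have htot : (tot./2 + tot./2 = a + sumn xs + 3 * size xs)%N.
  have := odd_double_half tot; rewrite (negbTE hodd) add0n -addnn => ->.
  by rewrite /tot sumn_shift3 addnA.
by rewrite -size_eq0; apply: avg_degree_bound hn htot.
Qed.

Section GaussianAverages.
Variables (U : Lser C) (n : nat).
Hypotheses (hn : (1 <= n)%N) (hU : deg_le n%:Z U) (hUn : U n%:Z != 0).

Let hV : deg_le (- n%:Z) (linv U) := linv_deg_le hU hUn.

Lemma gavg_deg a : deg_le 0 (gavg U a).
Proof.
move=> k hk; apply: fsbig1 => xs _.
by apply: (avg_term_deg (a := a) (xs := xs) hn hU hV); case: ifP => _ //; lia.
Qed.

Lemma gavg_Hminus a : (0 < a)%N -> Hminus (gavg U a).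
Proof.
move=> ha k hk; apply: fsbig1 => xs _.
by apply: (avg_term_deg (a := a) (xs := xs) hn hU hV); rewrite ifF; [lia | case: a ha].
Qed.

Lemma gavg0_nonneg k : 0 <= k -> gavg U 0 k = lone C k.
Proof.
move=> hk; rewrite /gavg (fsbig_setT_seq (r := [:: [::]])) //.
  rewrite big_seq1 /avg_term /= /lscale /gauss_moment /lexp /=.
  change (lone C) with (zpow C 0) at 1.
  by rewrite lmul_zpow_l subr0 big_ord0 !mul1r invr1 mul1r.
move=> xs; rewrite inE => hxs.
apply: (avg_term_deg (a := 0%N) (xs := xs) hn hU hV).
by rewrite ifF; [lia | apply/negbTE].
Qed.

Lemma gaussG_Dminus : Gminus1_in_Dminus (gaussG U).
Proof.
move=> m; case: (boolP (m == 0%N)) => [/eqP ->|hm] /=; split.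
- exists 0 => k hk; rewrite /ladd /gaussG /lscale gavg_deg // deg_le_one //.
  by rewrite !mulr0 addr0.
- move=> k hk; rewrite /ladd /gaussG /lscale gavg0_nonneg //.
  by rewrite invr1 mul1r mulN1r subrr.
- by exists 0 => k hk; rewrite /gaussG /lscale gavg_deg // mulr0.
- by move=> k hk; rewrite /gaussG /lscale gavg_Hminus ?mulr0 // lt0n.
Qed.

End GaussianAverages.

Lemma lderiv_zpow m (j : nat) :
  lderiv_n m (zpow C j%:Z) = fun i => (j ^_ m)%:R * zpow C (j - m)%N i.
Proof.
elim: m => [|m IH]; first by apply/funext => i; rewrite ffactn0 subn0 mul1r.
rewrite /lderiv_n iterS -/(lderiv_n m _) IH; apply/funext => i.
rewrite /lder /zpow ffactnSr natrM.
case: (ltnP m j) => hmj; last first.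
  have -> : (j - m = 0)%N by lia.
  by rewrite mulr0 mul0r; case: eqP => [->|_]; rewrite ?mulr0 ?mul0r.
case: eqP => hi; last by rewrite ifF ?mulr0 //; apply/negbTE/eqP; lia.
rewrite ifT; last by apply/eqP; lia.
by rewrite !mulr1 mulrC hi pmulrn.
Qed.

Definition poly_supp (D : nat) h := forall j, (j < 0) || (D%:Z < j) -> h j = 0.

Lemma poly_supp_le D D' h : (D <= D')%N -> poly_supp D h -> poly_supp D' h.
Proof.
move=> hD hh j hj; apply: hh.
by apply/orP; move/orP: hj => [] ?; [left|right]; lia.
Qed.

Lemma lmul_poly f h D k : poly_supp D h ->
  lmul f h k = \sum_(t < D.+1) f (k - t%:Z) * h t%:Z.
Proof.
move=> hh; rewrite /lmul (fsbig_setT_seq (r := [seq k - t%:Z | t <- iota 0 D.+1])).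
- rewrite big_map -(subn0 D.+1) -/(index_iota 0 D.+1) big_mkord.
  by apply: eq_bigr => t _; rewrite subKr.
- by rewrite map_inj_uniq ?iota_uniq // => x y; lia.
move=> i hi; rewrite hh ?mulr0 //.
apply/negP => /negP; rewrite negb_or -!leNgt => /andP[h1 h2].
move/negP: hi; apply; apply/mapP; exists (absz (k - i)); last by lia.
by rewrite mem_iota; lia.
Qed.

Lemma lder_poly_supp D h : poly_supp D.+1 h -> poly_supp D (lder h).
Proof.
move=> hh j hj; rewrite /lder.
case: (boolP (j == -1)) => [/eqP ->|hj1]; first by rewrite addNr mul0r.
by rewrite hh ?mulr0 //; apply/orP; move/orP: hj => [] ?; [left|right]; lia.
Qed.

Lemma lder_const h : poly_supp 0 h -> lder h = fun=> 0.
Proof.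
move=> hh; apply/funext => j; rewrite /lder.
case: (boolP (j == -1)) => [/eqP ->|hj1]; first by rewrite addNr mul0r.
by rewrite hh ?mulr0 //; apply/orP; case: (ltrP j 0) => ?; [left|right]; lia.
Qed.

Lemma lderiv_poly_supp D m h : poly_supp D h -> poly_supp (D - m) (lderiv_n m h).
Proof.
elim: m => [|m IH] hh; first by rewrite subn0.
rewrite /lderiv_n iterS -/(lderiv_n m _).
case: (ltnP m D) => hm.
  apply: lder_poly_supp; have -> : (D - m.+1).+1 = (D - m)%N by lia.
  exact: IH.
have -> : (D - m.+1 = 0)%N by lia.
have : poly_supp 0 (lderiv_n m h) by have := IH hh; have -> : (D - m = 0)%N by lia.
by move/lder_const => -> j _.
Qed.

Lemma lderiv_poly_vanish D m h : (D < m)%N -> poly_supp D h -> lderiv_n m h = fun=> 0.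
Proof.
case: m => // m hm hh; rewrite /lderiv_n iterS -/(lderiv_n m _); apply: lder_const.
by have := lderiv_poly_supp (m := m) hh; have -> : (D - m = 0)%N by lia.
Qed.

Lemma Dact_poly (G : Dop C) h D k : poly_supp D h ->
  Dact G h k = \sum_(m < D.+1) \sum_(t < D.+1) G m (k - t%:Z) * lderiv_n m h t%:Z.
Proof.
move=> hh; rewrite /Dact (fsbig_setT_seq (r := iota 0 D.+1)) ?iota_uniq //.
  rewrite -(subn0 D.+1) -/(index_iota 0 D.+1) big_mkord.
  apply: eq_bigr => m _; apply: lmul_poly.
  exact: poly_supp_le (leq_subr m D) (lderiv_poly_supp (m := m) hh).
move=> m; rewrite mem_iota add0n /= -leqNgt => hm.
by rewrite (lderiv_poly_vanish hm hh); apply: fsbig1 => i _; rewrite mulr0.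
Qed.

Lemma Dact_zpow (G : Dop C) (j : nat) k :
  Dact G (zpow C j%:Z) k = \sum_(m < j.+1) (j ^_ m)%:R * G m (k - (j - m)%N%:Z).
Proof.
transitivity (\sum_(m \in [set: nat]) (j ^_ m)%:R * G m (k - (j - m)%N%:Z)).
  by apply: eq_fsbigr => m _; rewrite lderiv_zpow lmul_zpow_r.
rewrite (fsbig_setT_seq (r := iota 0 j.+1)) ?iota_uniq //.
  by rewrite -(subn0 j.+1) -/(index_iota 0 j.+1) big_mkord.
move=> m; rewrite mem_iota add0n /= -leqNgt => hm.
by rewrite ffact_small ?mul0r.
Qed.

(* Since j^_m / m! = binom(j, m), the Gaussian operator maps z^j to the
   binomial expansion of <(z + phi)^j>_U. *)
Lemma Dact_gaussG_zpow (U : Lser C) (j : nat) :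
  Dact (gaussG U) (zpow C j%:Z) = PhiU U j.+1.
Proof.
apply/funext => i; rewrite Dact_zpow /PhiU /=; apply: eq_bigr => m _.
rewrite lmul_zpow_l /gaussG /lscale mulrA; congr (_ * _).
by rewrite -bin_ffact natrM mulfK // pnatr_eq0 -lt0n fact_gt0.
Qed.

Lemma lderiv_lin m N (c : nat -> C) (h : nat -> Lser C) :
  lderiv_n m (fun i => \sum_(k < N) c k * h k i) =
  fun i => \sum_(k < N) c k * lderiv_n m (h k) i.
Proof.
elim: m => [|m IH] //; rewrite /lderiv_n iterS -/(lderiv_n m _) IH.
apply/funext => i; rewrite /lder mulr_sumr; apply: eq_bigr => k _.
by rewrite /lderiv_n iterS /lder mulrCA.
Qed.

Lemma poly_supp_zpow N (k : nat) : (k <= N)%N -> poly_supp N (zpow C k%:Z).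
Proof. by move=> hk j hj; rewrite /zpow ifF //; apply/negbTE/eqP; lia. Qed.

Lemma poly_supp_sum N (c : nat -> C) :
  poly_supp N (fun i => \sum_(k < N) c k * zpow C k%:Z i).
Proof.
move=> j hj; apply: big1 => k _.
by rewrite (@poly_supp_zpow N k) ?mulr0 // ltnW.
Qed.

Lemma Dact_lin (G : Dop C) N (c : nat -> C) :
  Dact G (fun i => \sum_(k < N) c k * zpow C k%:Z i) =
  fun i => \sum_(k < N) c k * Dact G (zpow C k%:Z) i.
Proof.
apply/funext => i; rewrite (Dact_poly G i (@poly_supp_sum N c)).
under [RHS]eq_bigr => k _ do
  rewrite (Dact_poly G i (poly_supp_zpow (ltnW (ltn_ord k)))) mulr_sumr.
rewrite [RHS]exchange_big /=; apply: eq_bigr => m _.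
under [RHS]eq_bigr => k _ do rewrite mulr_sumr.
rewrite [RHS]exchange_big /=; apply: eq_bigr => t _.
rewrite (lderiv_lin m N c (fun k => zpow C k%:Z)) mulr_sumr.
by apply: eq_bigr => k _; rewrite mulrCA.
Qed.

Lemma Hplus_monomials p : Hplus p ->
  exists N : nat, p = fun i => \sum_(k < N) p k%:Z * zpow C k%:Z i.
Proof.
move=> [[N0 hN0] hneg]; exists (absz N0).+1; apply/funext => i.
case: (ltrP i 0) => hi.
  rewrite hneg //; symmetry; apply: big1 => k _; rewrite /zpow ifF ?mulr0 //.
  by apply/negbTE/eqP; lia.
have hiE : i = (absz i)%:Z by lia.
case: (ltnP (absz i) (absz N0).+1) => hm.
  rewrite (bigD1 (Ordinal hm)) //= /zpow -hiE eqxx mulr1 big1 ?addr0 //.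
  move=> k hk; rewrite ifF ?mulr0 //; apply/negbTE/eqP => hik.
  by move/eqP: hk; apply; apply: val_inj => /=; lia.
rewrite hN0; last by lia.
symmetry; apply: big1 => k _; rewrite /zpow ifF ?mulr0 //.
by apply/negbTE/eqP; have := ltn_ord k; lia.
Qed.

Lemma spanPhi_image (U : Lser C) : spanPhi U = (Dact (gaussG U) @` @Hplus C)%classic.
Proof.
apply/seteqP; split.
- move=> f [N [c ->]]; exists (fun i => \sum_(k < N) c k * zpow C k%:Z i).
    split; first by exists N%:Z => k hk; apply: poly_supp_sum; apply/orP; right.
    by move=> k hk; apply: poly_supp_sum; apply/orP; left.
  by rewrite Dact_lin; apply/funext => i; apply: eq_bigr => k _; rewrite Dact_gaussG_zpow.
- move=> f [p hp <-]; have [N hN] := Hplus_monomials hp.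
  exists N, (fun k => p k%:Z); rewrite {1}hN (Dact_lin _ N (fun k => p k%:Z)).
  apply/funext => i.
  by apply: eq_bigr => k _; rewrite Dact_gaussG_zpow.
Qed.

End LaurentSeries.

Theorem mainTheorem7 (R : realType) (hbar : R[i]) (n : nat) (b : int -> R[i]) :
  hbar != 0 -> (1 <= n)%N ->
  (forall k : int, n%:Z < k -> b k = 0) -> b n%:Z != 0 ->
  let U : Lser R[i] := fun k => hbar^-1 * b k in
  is_Sato_element (WU U) (gaussG U) /\
  (forall k : nat, (1 <= k)%N -> Dact (gaussG U) (zpow R[i] (k.-1)%:Z) = PhiU U k).
Proof.
move=> hhbar hn hb hbn U.
have hU : deg_le n%:Z U by move=> k hk; rewrite /U hb ?mulr0.
have hUn : U n%:Z != 0 by rewrite /U mulf_neq0 ?invr_eq0.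
split; first by split; [exact: gaussG_Dminus hn hU hUn | rewrite /WU spanPhi_image].
by case=> // k _; rewrite Dact_gaussG_zpow.
Qed.
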